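(* For each integer $r\geq 2$ let $\mathfrak{C}_r$ be the structure $(\mathbb{Z};0,+,\leq,P_2^r)$ in the language $\{0,+,\leq,R_2\}$, where $R_2$ is a unary relation symbol interpreted as $P_2^r(x)$: ''$x$ is the square of an integer and $r$ does not divide $x$''. Then there is a single positive existential formula in the language $\{0,+,R_2\}$ which, in every structure $\mathfrak{C}_r$ with $r\geq 2$, defines the relation $\leq$ on $\mathbb{Z}$. (That is, $\leq$ is uniformly positive existentially $\{0,+,R_2\}$-definable in the class $\{\mathfrak{C}_r : r\geq 2\}$.) *)

From Stdlib Require Import ZArith.
Open Scope Z_scope.

(* Terms of the language {0, +}; variables are de Bruijn-style indices. *)
Inductive term : Type :=
  | tvar : nat -> term
  | tzero : term
  | tplus : term -> term -> term.

Inductive pef : Type :=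
  | feq : term -> term -> pef
  | fR2 : term -> pef
  | fand : pef -> pef -> pef
  | for_ : pef -> pef -> pef
  | fex : pef -> pef.  (* binds variable 0; old variable n becomes n+1 *)

Fixpoint teval (e : nat -> Z) (t : term) : Z :=
  match t with
  | tvar n => e n
  | tzero => 0
  | tplus a b => teval e a + teval e b
  end.

Definition P2 (r x : Z) : Prop := (exists z : Z, x = z * z) /\ ~ (r | x)%Z.

Definition scons (z : Z) (e : nat -> Z) : nat -> Z :=
  fun n => match n with O => z | S m => e m end.

(* Satisfaction in C_r = (Z; 0, +, <=, P_2^r) (the formula does not use <=). *)
Fixpoint sat (r : Z) (e : nat -> Z) (f : pef) : Prop :=
  match f with
  | feq a b => teval e a = teval e b
  | fR2 a => P2 r (teval e a)
  | fand f g => sat r e f /\ sat r e g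
  | for_ f g => sat r e f \/ sat r e g
  | fex f => exists z : Z, sat r (scons z e) f
  end.

(* For r >= 2 the formula says that 2 (y - x) is a sum of sixteen elements of
   P_2^r or 0. Such sums are nonnegative. Conversely, by Lagrange's four-square
   theorem (applied to y - x - 4 when y - x >= 4), 2 (y - x) is a sum of four terms
   each 0 or 2 (z^2 + 1); and 2 (z^2 + 1) is z^2 + z^2 + 1 + 1 when r does not
   divide z^2, and (z + 1)^2 + (z - 1)^2 + 0 + 0 otherwise, since r then divides
   neither neighbouring square. Lagrange's theorem is proved by Euler's identity
   and Lagrange's descent, starting from a multiple of p of the form x^2 + y^2 + 1
   found by pigeonhole. *)

From Stdlib Require Import ZArith Znumtheory List FinFun Lia Classical.
Import ListNotations.
Open Scope Z_scope.

Definition sum_of_four_squares (n : Z) : Prop :=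
  exists a b c d : Z, n = a*a + b*b + c*c + d*d.

Lemma sum_of_four_squares_mul m n :
  sum_of_four_squares m -> sum_of_four_squares n -> sum_of_four_squares (m * n).
Proof.
  intros [a1 [a2 [a3 [a4 ->]]]] [b1 [b2 [b3 [b4 ->]]]].
  exists (a1*b1 + a2*b2 + a3*b3 + a4*b4), (a1*b2 - a2*b1 + a3*b4 - a4*b3),
         (a1*b3 - a2*b4 - a3*b1 + a4*b2), (a1*b4 + a2*b3 - a3*b2 - a4*b1).
  ring.
Qed.

Lemma centered_residue x m : 0 < m -> exists k, -m < 2 * (x - m * k) <= m.
Proof.
  intros Hm. pose proof (Z.div_mod x m ltac:(lia)). pose proof (Z.mod_pos_bound x m Hm).
  destruct (Z_le_gt_dec (2 * (x mod m)) m).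
  - exists (x / m). lia.
  - exists (x / m + 1). lia.
Qed.

Lemma square_le_of_centered y m : -m < 2 * y <= m -> 4 * (y * y) <= m * m.
Proof. nia. Qed.

Lemma double_eq_of_centered_square_eq y m : -m < 2 * y -> 4 * (y * y) = m * m -> 2 * y = m.
Proof.
  intros Hy E. assert (Hf : (2 * y - m) * (2 * y + m) = 0) by nia.
  apply Z.mul_eq_0 in Hf. lia.
Qed.

Lemma not_divide_prime p m : prime p -> 1 < m < p -> ~ (m | p).
Proof. intros Hp Hm Hd. destruct (prime_divisors p Hp m Hd) as [H|[H|[H|H]]]; lia. Qed.

Lemma divide_of_sum_of_four_squares_multiples m p k1 k2 k3 k4 : m <> 0 ->
  m * p = (m*k1)*(m*k1) + (m*k2)*(m*k2) + (m*k3)*(m*k3) + (m*k4)*(m*k4) -> (m | p).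
Proof.
  intros Hm Hs. exists (k1*k1 + k2*k2 + k3*k3 + k4*k4).
  apply (Z.mul_reg_l _ _ m); [exact Hm|]. rewrite Hs. ring.
Qed.

Lemma divide_of_sum_of_four_squares_half_multiples m p x1 x2 x3 x4 k1 k2 k3 k4 :
  m <> 0 -> m * p = x1*x1 + x2*x2 + x3*x3 + x4*x4 ->
  2 * x1 = m * (2 * k1 + 1) -> 2 * x2 = m * (2 * k2 + 1) ->
  2 * x3 = m * (2 * k3 + 1) -> 2 * x4 = m * (2 * k4 + 1) -> (m | p).
Proof.
  intros Hm Hs E1 E2 E3 E4. exists (1 + (k1 + k1*k1) + (k2 + k2*k2) + (k3 + k3*k3) + (k4 + k4*k4)).
  apply (Z.mul_reg_l _ _ (4 * m)); [lia|].
  transitivity ((2*x1)*(2*x1) + (2*x2)*(2*x2) + (2*x3)*(2*x3) + (2*x4)*(2*x4)).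
  - rewrite <- Z.mul_assoc, Hs. ring.
  - rewrite E1, E2, E3, E4. ring.
Qed.

(* By Euler's identity [(m p) (m r)] is a sum of four squares of multiples of [m]. *)
Lemma sum_of_four_squares_descent_step m p r x1 x2 x3 x4 k1 k2 k3 k4 : m <> 0 ->
  m * p = x1*x1 + x2*x2 + x3*x3 + x4*x4 ->
  (x1 - m*k1)*(x1 - m*k1) + (x2 - m*k2)*(x2 - m*k2)
    + (x3 - m*k3)*(x3 - m*k3) + (x4 - m*k4)*(x4 - m*k4) = m * r ->
  sum_of_four_squares (r * p).
Proof.
  intros Hm Hs Hr.
  set (s := x1*k1 + x2*k2 + x3*k3 + x4*k4).
  exists (p - s), (x1*k2 - x2*k1 + x3*k4 - x4*k3),
         (x1*k3 - x2*k4 - x3*k1 + x4*k2), (x1*k4 + x2*k3 - x3*k2 - x4*k1).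
  apply (Z.mul_reg_l _ _ (m * m)); [nia|].
  transitivity ((m * p) * (m * r)); [ring|].
  transitivity ((m * p - m * s) * (m * p - m * s)
    + m*m*((x1*k2 - x2*k1 + x3*k4 - x4*k3)*(x1*k2 - x2*k1 + x3*k4 - x4*k3)
         + (x1*k3 - x2*k4 - x3*k1 + x4*k2)*(x1*k3 - x2*k4 - x3*k1 + x4*k2)
         + (x1*k4 + x2*k3 - x3*k2 - x4*k1)*(x1*k4 + x2*k3 - x3*k2 - x4*k1))); [|ring].
  rewrite Hs, <- Hr. unfold s. ring.
Qed.

Lemma sum_of_four_squares_descent p m x1 x2 x3 x4 : prime p -> 1 < m < p ->
  m * p = x1*x1 + x2*x2 + x3*x3 + x4*x4 ->
  exists r, 0 < r < m /\ sum_of_four_squares (r * p).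
Proof.
  intros Hp Hm Hs.
  destruct (centered_residue x1 m ltac:(lia)) as [k1 B1].
  destruct (centered_residue x2 m ltac:(lia)) as [k2 B2].
  destruct (centered_residue x3 m ltac:(lia)) as [k3 B3].
  destruct (centered_residue x4 m ltac:(lia)) as [k4 B4].
  set (r := p - 2 * (x1*k1 + x2*k2 + x3*k3 + x4*k4) + m * (k1*k1 + k2*k2 + k3*k3 + k4*k4)).
  set (y1 := x1 - m*k1) in *. set (y2 := x2 - m*k2) in *.
  set (y3 := x3 - m*k3) in *. set (y4 := x4 - m*k4) in *.
  assert (Hr : y1*y1 + y2*y2 + y3*y3 + y4*y4 = m * r).
  { unfold y1, y2, y3, y4, r.
    transitivity (x1*x1 + x2*x2 + x3*x3 + x4*x4
      - 2 * m * (x1*k1 + x2*k2 + x3*k3 + x4*k4) + m*m*(k1*k1 + k2*k2 + k3*k3 + k4*k4)); [ring|].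
    rewrite <- Hs. ring. }
  pose proof (square_le_of_centered y1 m B1). pose proof (square_le_of_centered y2 m B2).
  pose proof (square_le_of_centered y3 m B3). pose proof (square_le_of_centered y4 m B4).
  pose proof (Z.square_nonneg y1). pose proof (Z.square_nonneg y2).
  pose proof (Z.square_nonneg y3). pose proof (Z.square_nonneg y4).
  assert (Hr0 : r <> 0).
  { intros R0. apply (not_divide_prime p m Hp Hm).
    apply (divide_of_sum_of_four_squares_multiples m p k1 k2 k3 k4); [lia|].
    rewrite Hs. rewrite R0, Z.mul_0_r in Hr.
    assert (y1 * y1 = 0 /\ y2 * y2 = 0 /\ y3 * y3 = 0 /\ y4 * y4 = 0) as (Z1 & Z2 & Z3 & Z4) by lia.
    apply Z.mul_eq_0 in Z1, Z2, Z3, Z4.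
    replace x1 with (m*k1) by lia. replace x2 with (m*k2) by lia.
    replace x3 with (m*k3) by lia. replace x4 with (m*k4) by lia. reflexivity. }
  assert (Hrm : r <> m).
  { intros Rm. rewrite Rm in Hr. apply (not_divide_prime p m Hp Hm).
    apply (divide_of_sum_of_four_squares_half_multiples m p x1 x2 x3 x4 k1 k2 k3 k4);
      [lia | exact Hs | ..].
    - pose proof (double_eq_of_centered_square_eq y1 m (proj1 B1) ltac:(lia)). unfold y1 in *. lia.
    - pose proof (double_eq_of_centered_square_eq y2 m (proj1 B2) ltac:(lia)). unfold y2 in *. lia.
    - pose proof (double_eq_of_centered_square_eq y3 m (proj1 B3) ltac:(lia)). unfold y3 in *. lia.
    - pose proof (double_eq_of_centered_square_eq y4 m (proj1 B4) ltac:(lia)).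
      unfold y4 in *. lia. }
  assert (Hrb : 0 <= r <= m).
  { split.
    - apply (Z.mul_le_mono_pos_l _ _ m); lia.
    - apply (Z.mul_le_mono_pos_l _ _ (4 * m)); lia. }
  exists r. split; [lia|].
  exact (sum_of_four_squares_descent_step m p r x1 x2 x3 x4 k1 k2 k3 k4 ltac:(lia) Hs Hr).
Qed.

Lemma prime_odd p : prime p -> p <> 2 -> p = 2 * (p / 2) + 1.
Proof.
  intros Hp H2. pose proof (prime_ge_2 p Hp).
  assert (Hodd : p mod 2 <> 0).
  { intros E%Z.mod_divide; [|lia]. exact (not_divide_prime p 2 Hp ltac:(lia) E). }
  pose proof (Z.div_mod p 2 ltac:(lia)). pose proof (Z.mod_pos_bound p 2 ltac:(lia)). lia.
Qed.

Lemma eq_of_prime_divide_sub_squares p i j : prime p -> 0 <= i -> 0 <= j -> i + j < p ->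
  (p | i * i - j * j) -> i = j.
Proof.
  intros Hp Hi Hj Hij Hd. replace (i * i - j * j) with ((i - j) * (i + j)) in Hd by ring.
  pose proof (prime_ge_2 p Hp). destruct (Z.eq_dec i j) as [|Hne]; [assumption | exfalso].
  destruct (prime_mult p Hp _ _ Hd) as [D|D]; apply Zdivide_bounds in D; lia.
Qed.

(* The [h + 1] residues of [x^2] and the [h + 1] residues of [-1 - y^2] cannot
   all be distinct among the [p = 2h + 1] residues mod [p]. *)
Lemma prime_divide_sum_two_squares_add_one p : prime p -> p <> 2 ->
  exists x y, 0 <= x /\ 0 <= y /\ 2 * x < p /\ 2 * y < p /\ (p | x * x + y * y + 1).
Proof.
  intros Hp H2. pose proof (prime_odd p Hp H2) as Eh. set (h := p / 2) in Eh.
  pose proof (prime_ge_2 p Hp).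
  apply NNPP. intro Hn.
  set (L := map Z.of_nat (seq 0 (S (Z.to_nat h)))).
  assert (HL : forall i, In i L -> 0 <= i <= h).
  { intros i Hi. apply in_map_iff in Hi as (n & <- & Hn'). apply in_seq in Hn'. lia. }
  assert (HLnd : NoDup L) by (apply Injective_map_NoDup; [exact Nat2Z.inj | apply seq_NoDup]).
  assert (Hsq : NoDup (map (fun i => (i * i) mod p) L)).
  { apply Injective_map_NoDup_in; [|exact HLnd]. intros i j Hi%HL Hj%HL E.
    apply (eq_of_prime_divide_sub_squares p); [exact Hp | lia .. | apply Z.cong_iff_ex, E]. }
  assert (Hneg : NoDup (map (fun j => (-1 - j * j) mod p) L)).
  { apply Injective_map_NoDup_in; [|exact HLnd]. intros i j Hi%HL Hj%HL E.
    symmetry. apply (eq_of_prime_divide_sub_squares p); [exact Hp | lia .. |].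
    replace (j * j - i * i) with ((-1 - i * i) - (-1 - j * j)) by ring.
    apply Z.cong_iff_ex, E. }
  assert (Hall : NoDup (map (fun i => (i * i) mod p) L ++ map (fun j => (-1 - j * j) mod p) L)).
  { apply NoDup_app; [exact Hsq | exact Hneg |].
    intros a Ha Hb. apply in_map_iff in Ha as (i & <- & Hi%HL).
    apply in_map_iff in Hb as (j & Ej%Z.cong_iff_ex & Hj%HL).
    apply Hn. exists i, j. repeat split; try lia.
    replace (i * i + j * j + 1) with (- (-1 - j * j - i * i)) by ring.
    apply Z.divide_opp_r. exact Ej. }
  assert (Hincl : incl (map (fun i => (i * i) mod p) L ++ map (fun j => (-1 - j * j) mod p) L)
                       (map Z.of_nat (seq 0 (Z.to_nat p)))).
  { intros a Ha. assert (Hb : 0 <= a < p).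
    { apply in_app_or in Ha as [Ha|Ha]; apply in_map_iff in Ha as (i & <- & _);
        apply Z.mod_pos_bound; lia. }
    apply in_map_iff. exists (Z.to_nat a). split; [lia|]. apply in_seq. lia. }
  apply NoDup_incl_length in Hincl; [|exact Hall].
  rewrite length_app, !length_map, length_seq in Hincl. unfold L in Hincl.
  rewrite length_map, length_seq in Hincl. lia.
Qed.

Lemma sum_of_four_squares_prime p : prime p -> sum_of_four_squares p.
Proof.
  intros Hp. pose proof (prime_ge_2 p Hp).
  destruct (Z.eq_dec p 2) as [->|H2]; [exists 1, 1, 0, 0; reflexivity|].
  destruct (prime_divide_sum_two_squares_add_one p Hp H2) as (x & y & Hx & Hy & Hx' & Hy' & m & Hm).
  assert (Hmp : 0 < m < p) by nia.
  assert (Hs : sum_of_four_squares (m * p)) by (exists x, y, 1, 0; lia).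
  clear x y Hx Hy Hx' Hy' Hm.
  revert Hmp Hs. induction m as [m IH] using (well_founded_induction (Z.lt_wf 0)). intros Hmp Hs.
  destruct (Z.eq_dec m 1) as [->|Hm1]; [rewrite Z.mul_1_l in Hs; exact Hs|].
  destruct Hs as (a & b & c & d & Hs).
  destruct (sum_of_four_squares_descent p m a b c d Hp ltac:(lia) Hs) as (r & Hr & Hsr).
  apply (IH r); [lia | lia | exact Hsr].
Qed.

Theorem sum_of_four_squares_nonneg n : 0 <= n -> sum_of_four_squares n.
Proof.
  induction n as [n IH] using (well_founded_induction (Z.lt_wf 0)). intros Hn.
  destruct (Z_lt_le_dec n 2) as [Hs|Hs].
  - assert (n = 0 \/ n = 1) as [-> | ->] by lia;
      [exists 0, 0, 0, 0 | exists 1, 0, 0, 0]; reflexivity.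
  - destruct (prime_dec n) as [Hp|Hp]; [exact (sum_of_four_squares_prime n Hp)|].
    destruct (not_prime_divide n ltac:(lia) Hp) as (a & Ha & b & ->).
    apply sum_of_four_squares_mul; apply IH; nia.
Qed.

Definition sum_list (l : list Z) : Z := fold_right Z.add 0 l.

Lemma sum_list_app l1 l2 : sum_list (l1 ++ l2) = sum_list l1 + sum_list l2.
Proof. induction l1 as [|a l1 IH]; simpl; lia. Qed.

Lemma sum_list_nonneg (l : list Z) : Forall (fun s => 0 <= s) l -> 0 <= sum_list l.
Proof. induction 1; simpl; lia. Qed.

Definition fsum (ts : list term) : term := fold_right tplus tzero ts.

Definition fconj (fs : list pef) : pef := fold_right fand (feq tzero tzero) fs.

Fixpoint fexn (k : nat) (f : pef) : pef :=
  match k with O => f | S k => fex (fexn k f) end.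

Definition prepend (l : list Z) (e : nat -> Z) : nat -> Z := fold_right scons e l.

Lemma teval_fsum e ts : teval e (fsum ts) = sum_list (map (teval e) ts).
Proof. induction ts as [|t ts IH]; simpl; congruence. Qed.

Lemma sat_fconj r e fs : sat r e (fconj fs) <-> Forall (sat r e) fs.
Proof.
  induction fs as [|f fs IH]; simpl.
  - split; auto.
  - rewrite Forall_cons_iff, IH. reflexivity.
Qed.

(* The outermost quantifier of [fexn k f] provides the last entry of [l]. *)
Lemma sat_fexn r e k f :
  sat r e (fexn k f) <-> exists l, length l = k /\ sat r (prepend l e) f.
Proof.
  revert e. induction k as [|k IH]; intros e; simpl.
  - split; [exists []; auto | intros ([|z l] & Hl & H); [exact H | discriminate]].
  - split.
    + intros [z Hz]. apply IH in Hz as (l & Hl & H). exists (l ++ [z]). split.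
      * rewrite length_app, Hl. simpl. lia.
      * unfold prepend. rewrite fold_right_app. exact H.
    + intros (l & Hl & H). destruct (exists_last (l := l)) as (l' & z & ->).
      { intros ->. discriminate. }
      rewrite length_app in Hl. simpl in Hl.
      exists z. apply IH. exists l'. split; [lia|].
      unfold prepend in H. rewrite fold_right_app in H. exact H.
Qed.

Lemma map_prepend_seq l e : map (prepend l e) (seq 0 (length l)) = l.
Proof.
  induction l as [|z l IH]; [reflexivity|].
  simpl. rewrite <- seq_shift, map_map. f_equal. exact IH.
Qed.

Lemma prepend_add_length l e n : prepend l e (length l + n) = e n.
Proof. induction l as [|z l IH]; [reflexivity | exact IH]. Qed.

Definition vars (k : nat) : list term := map tvar (seq 0 k).

Lemma teval_vars l e : map (teval (prepend l e)) (vars (length l)) = l.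
Proof. unfold vars. rewrite map_map. apply map_prepend_seq. Qed.

Definition P2_or_zero (r s : Z) : Prop := s = 0 \/ P2 r s.

Definition sum_of_P2_or_zero (r : Z) (k : nat) (n : Z) : Prop :=
  exists l, length l = k /\ Forall (P2_or_zero r) l /\ sum_list l = n.

Definition P2_or_zero_formula (t : term) : pef := for_ (feq t tzero) (fR2 t).

Lemma sat_P2_or_zero_vars r l e :
  Forall (fun t => sat r (prepend l e) (P2_or_zero_formula t)) (vars (length l))
  <-> Forall (P2_or_zero r) l.
Proof.
  pose proof (Forall_map (teval (prepend l e)) (P2_or_zero r) (vars (length l))) as H.
  rewrite teval_vars in H. exact (iff_sym H).
Qed.

(* Under the [k] quantifiers the free variables [x = tvar 0] and [y = tvar 1] are
   [tvar k] and [tvar (S k)]. *)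
Definition le_formula (k : nat) : pef :=
  fexn k (fand (feq (tplus (tplus (tvar k) (tvar k)) (fsum (vars k)))
                    (tplus (tvar (S k)) (tvar (S k))))
               (fconj (map P2_or_zero_formula (vars k)))).

Lemma sat_le_formula r e k :
  sat r e (le_formula k) <-> sum_of_P2_or_zero r k (2 * e 1%nat - 2 * e 0%nat).
Proof.
  unfold le_formula, sum_of_P2_or_zero. rewrite sat_fexn. cbn [sat teval].
  apply Morphisms_Prop.ex_iff_morphism. intros l.
  split; intros (<- & H1 & H2); (split; [reflexivity|]).
  all: rewrite sat_fconj, teval_fsum, teval_vars, Forall_map, sat_P2_or_zero_vars in *.
  all: rewrite <- (prepend_add_length l e 0), <- (prepend_add_length l e 1),
      Nat.add_0_r, Nat.add_1_r in *.
  - split; [exact H2 | lia].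
  - split; [lia | exact H1].
Qed.

Lemma sum_of_P2_or_zero_nonneg r k n : sum_of_P2_or_zero r k n -> 0 <= n.
Proof.
  intros (l & _ & Hl & <-). apply sum_list_nonneg.
  eapply Forall_impl; [|exact Hl]. intros s [-> | [[z ->] _]]; [lia | apply Z.square_nonneg].
Qed.

Lemma P2_one r : 2 <= r -> P2 r 1.
Proof. intros Hr. split; [exists 1; reflexivity|]. intros D%Z.divide_1_r. lia. Qed.

(* [(z + u)^2 - z^2 = 2uz + 1 =: w], and [1 = 2w - w^2 + 4z^2]. *)
Lemma not_divide_square_neighbor r z u : 2 <= r -> u * u = 1 ->
  (r | z * z) -> ~ (r | (z + u) * (z + u)).
Proof.
  intros Hr Hu Dz Dzu.
  assert (Dw : (r | 2 * u * z + 1)).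
  { replace (2 * u * z + 1) with ((z + u) * (z + u) - z * z) by nia.
    apply Z.divide_sub_r; assumption. }
  assert (D1 : (r | 1)).
  { replace 1 with (2 * (2 * u * z + 1) - (2 * u * z + 1) * (2 * u * z + 1) + 4 * (z * z)) by nia.
    apply Z.divide_add_r; [apply Z.divide_sub_r|]; apply Z.divide_mul_r; assumption. }
  apply Z.divide_1_r in D1. lia.
Qed.

Lemma sum_of_P2_or_zero_add r k1 k2 n1 n2 :
  sum_of_P2_or_zero r k1 n1 -> sum_of_P2_or_zero r k2 n2 -> sum_of_P2_or_zero r (k1 + k2) (n1 + n2).
Proof.
  intros (l1 & <- & H1 & <-) (l2 & <- & H2 & <-). exists (l1 ++ l2).
  rewrite length_app, Forall_app, sum_list_app. auto.
Qed.

Lemma sum_of_P2_or_zero_double_square_succ r z : 2 <= r ->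
  sum_of_P2_or_zero r 4 (2 * (z * z + 1)).
Proof.
  intros Hr. destruct (Zdivide_dec r (z * z)) as [D|D].
  - exists [(z + 1) * (z + 1); (z + -1) * (z + -1); 0; 0].
    split; [reflexivity|]. split; [|cbn [sum_list fold_right]; ring].
    apply Forall_forall. intros s Hs. simpl in Hs.
    destruct Hs as [<- | [<- | [<- | [<- | []]]]]; [right .. | left; reflexivity | left; reflexivity].
    all: split; [eexists; reflexivity|].
    all: apply (not_divide_square_neighbor r z); [lia | reflexivity | exact D].
  - exists [z * z; z * z; 1; 1].
    split; [reflexivity|]. split; [|cbn [sum_list fold_right]; ring].
    apply Forall_forall. intros s Hs. simpl in Hs. right.
    destruct Hs as [<- | [<- | [<- | [<- | []]]]]; try (apply P2_one; exact Hr).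
    all: split; [exists z; reflexivity | exact D].
Qed.

Definition zero_or_square_succ (t : Z) : Prop := t = 0 \/ exists z, t = z * z + 1.

Lemma sum_four_zero_or_square_succ n : 0 <= n -> exists t1 t2 t3 t4,
  zero_or_square_succ t1 /\ zero_or_square_succ t2 /\ zero_or_square_succ t3 /\
  zero_or_square_succ t4 /\ n = t1 + t2 + t3 + t4.
Proof.
  intros Hn.
  assert (Z0 : zero_or_square_succ 0) by (left; reflexivity).
  assert (Z1 : zero_or_square_succ 1) by (right; exists 0; reflexivity).
  destruct (Z_lt_le_dec n 4) as [Hs|Hs].
  - assert (n = 0 \/ n = 1 \/ n = 2 \/ n = 3) as [-> | [-> | [-> | ->]]] by lia;
      [exists 0, 0, 0, 0 | exists 1, 0, 0, 0 | exists 1, 1, 0, 0 | exists 1, 1, 1, 0];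
      repeat split; assumption.
  - destruct (sum_of_four_squares_nonneg (n - 4) ltac:(lia)) as (a & b & c & d & E).
    exists (a * a + 1), (b * b + 1), (c * c + 1), (d * d + 1).
    repeat split; try (right; eexists; reflexivity). lia.
Qed.

Lemma sum_of_P2_or_zero_double r t : 2 <= r -> zero_or_square_succ t ->
  sum_of_P2_or_zero r 4 (2 * t).
Proof.
  intros Hr [-> | [z ->]].
  - exists [0; 0; 0; 0]. split; [reflexivity|]. split; [|reflexivity].
    repeat constructor.
  - apply sum_of_P2_or_zero_double_square_succ. exact Hr.
Qed.

Lemma sum_of_sixteen_P2_or_zero r n : 2 <= r -> 0 <= n -> sum_of_P2_or_zero r 16 (2 * n).
Proof.
  intros Hr Hn.
  destruct (sum_four_zero_or_square_succ n Hn) as (t1 & t2 & t3 & t4 & T1 & T2 & T3 & T4 & ->).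
  replace (2 * (t1 + t2 + t3 + t4)) with ((2 * t1 + 2 * t2) + (2 * t3 + 2 * t4)) by ring.
  apply (sum_of_P2_or_zero_add r 8 8); apply (sum_of_P2_or_zero_add r 4 4);
    apply sum_of_P2_or_zero_double; assumption.
Qed.

Theorem proposition1p4 :
  exists phi : pef,
    forall r : Z, 2 <= r ->
      forall e : nat -> Z, sat r e phi <-> e 0%nat <= e 1%nat.
Proof.
  exists (le_formula 16). intros r Hr e. rewrite sat_le_formula. split.
  - intros H%sum_of_P2_or_zero_nonneg. lia.
  - intros Hle. replace (2 * e 1%nat - 2 * e 0%nat) with (2 * (e 1%nat - e 0%nat)) by ring.
    apply sum_of_sixteen_P2_or_zero; lia.
Qed.
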